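(* Let $\mathcal T$ be an atomic orbital category. For all unital $\mathcal T$-weak indexing systems $\mathcal C,\mathcal D$, we have $\nabla(\mathcal C\vee\mathcal D)=\nabla(\mathcal C)\cup\nabla(\mathcal D)$.
   Context: For a small category $\mathcal T$, $\mathbb F_{\mathcal T}$ is the full subcategory of $\mathrm{Fun}(\mathcal T^{op},\mathrm{Set})$ on finite coproducts of representables; $\mathcal T$ is orbital if $\mathbb F_{\mathcal T}$ has pullbacks, and atomic if every morphism of $\mathcal T$ admitting a section is an isomorphism. $\mathbb F_V:=\mathbb F_{\mathcal T,/V}$, $*_V$ terminal, $n\cdot S$ the $n$-fold coproduct; for $U\to V$, $\mathrm{Res}^V_U$ is pullback and $\mathrm{Ind}^V_U$ postcomposition. A full $\mathcal T$-subcategory assigns isomorphism-closed classes $\mathcal C_V\subseteq\mathrm{Ob}\,\mathbb F_V$ stable under restriction. For $S\in\mathbb F_V$ with orbits $U$ and $T_U\in\mathbb F_U$, $\coprod_U^ST_U:=\coprod_U\mathrm{Ind}_U^VT_U$. A $\mathcal T$-weak indexing system is a full $\mathcal T$-subcategory with $\mathcal C_V\neq\emptyset\Rightarrow *_V\in\mathcal C_V$ and closed under $\coprod^S_UT_U$ for $S\in\mathcal C_V$, $T_U\in\mathcal C_U$; these form a lattice under inclusion with join $\vee$. It is unital if every $\mathcal C_V$ is nonempty and $S\sqcup S'\in\mathcal C_V\Rightarrow S,S'\in\mathcal C_V$. $\nabla(\mathcal C)=\{V\in\mathcal T\mid 2\cdot *_V\in\mathcal C_V\}$. *)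

From mathcomp Require Import all_boot.

Set Implicit Arguments.
Unset Strict Implicit.
Unset Printing Implicit Defensive.

Record Cat := {
  Ob :> Type;
  Hom : Ob -> Ob -> Type;
  idm : forall a, Hom a a;
  comp : forall a b c, Hom b c -> Hom a b -> Hom a c;
  comp1m : forall a b (f : Hom a b), comp (idm b) f = f;
  compm1 : forall a b (f : Hom a b), comp f (idm a) = f;
  compA : forall a b c d (h : Hom c d) (g : Hom b c) (f : Hom a b),
      comp h (comp g f) = comp (comp h g) f
}.
Arguments Hom {C} : rename.
Arguments idm {C} : rename.
Arguments comp {C a b c} : rename.

Section FT.
Variable T : Cat.

(* F_T : finite coproducts of representables in Fun(T^op, Set),       *)
(* presented as finite families of objects of T.  A morphism          *)
(*   coprod_i y(U_i) -> coprod_j y(V_j)                                *)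
(* is (Yoneda, coproducts pointwise) a choice for each i of an index  *)
(* j and a morphism U_i -> V_j in T.                                   *)
Record FObj := { fidx : finType; fob : fidx -> Ob T }.
Arguments fob : clear implicits.

Record FHom (X Y : FObj) := {
  fimap : fidx X -> fidx Y;
  fmap : forall i, Hom (fob X i) (fob Y (fimap i)) }.
Arguments fimap {X Y}.
Arguments fmap {X Y}.

Definition feq (X Y : FObj) (f g : FHom X Y) : Prop :=
  forall i, existT (fun j => Hom (fob X i) (fob Y j)) (fimap f i) (fmap f i)
          = existT (fun j => Hom (fob X i) (fob Y j)) (fimap g i) (fmap g i).

Definition fcomp (X Y Z : FObj) (g : FHom Y Z) (f : FHom X Y) : FHom X Z :=
  {| fimap := fun i => fimap g (fimap f i);
     fmap := fun i => comp (fmap g (fimap f i)) (fmap f i) |}.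

Definition fid (X : FObj) : FHom X X :=
  {| fimap := fun i => i; fmap := fun i => idm (fob X i) |}.

Definition is_pullback (X Y Z P : FObj) (f : FHom X Z) (g : FHom Y Z)
    (p1 : FHom P X) (p2 : FHom P Y) : Prop :=
  feq (fcomp f p1) (fcomp g p2) /\
  forall (Q : FObj) (q1 : FHom Q X) (q2 : FHom Q Y),
    feq (fcomp f q1) (fcomp g q2) ->
    exists h : FHom Q P, feq (fcomp p1 h) q1 /\ feq (fcomp p2 h) q2 /\
      forall h' : FHom Q P, feq (fcomp p1 h') q1 -> feq (fcomp p2 h') q2 ->
        feq h' h.

Definition orbital : Prop :=
  forall (X Y Z : FObj) (f : FHom X Z) (g : FHom Y Z),
    exists (P : FObj) (p1 : FHom P X) (p2 : FHom P Y), is_pullback f g p1 p2.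

Definition atomic : Prop :=
  forall (U V : Ob T) (f : Hom U V),
    (exists s : Hom V U, comp f s = idm V) ->
    exists g : Hom V U, comp f g = idm V /\ comp g f = idm U.

Definition rep (V : Ob T) : FObj := {| fidx := unit; fob := fun _ => V |}.

Definition repHom (U V : Ob T) (f : Hom U V) : FHom (rep U) (rep V) :=
  @Build_FHom (rep U) (rep V) (fun i => i) (fun _ => f).

(* F_V = F_{T,/V}: objects of F_T together with a map to y(V).        *)
Record SObj (V : Ob T) := {
  sidx : finType;
  sob : sidx -> Ob T;
  sproj : forall i, Hom (sob i) V }.
Arguments sidx {V}.
Arguments sob {V}.
Arguments sproj {V}.

Definition toF (V : Ob T) (S : SObj V) : FObj := {| fidx := sidx S; fob := sob S |}.

Definition sprojF (V : Ob T) (S : SObj V) : FHom (toF S) (rep V) :=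
  @Build_FHom (toF S) (rep V) (fun _ => tt) (sproj S).

Definition sliceOf (U : Ob T) (P : FObj) (p : FHom P (rep U)) : SObj U :=
  {| sidx := fidx P; sob := fob P; sproj := fmap p |}.

Definition siso (V : Ob T) (S S' : SObj V) : Prop :=
  exists (h : FHom (toF S) (toF S')) (k : FHom (toF S') (toF S)),
    [/\ feq (fcomp (sprojF S') h) (sprojF S),
        feq (fcomp (sprojF S) k) (sprojF S'),
        feq (fcomp k h) (fid _) & feq (fcomp h k) (fid _)].

Definition star (V : Ob T) : SObj V :=
  {| sidx := unit; sob := fun _ => V; sproj := fun _ => idm V |}.

Definition sdisj (V : Ob T) (S S' : SObj V) : SObj V :=
  let ob := fun x : (sidx S + sidx S')%type =>
              match x with inl i => sob S i | inr j => sob S' j end in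
  {| sidx := (sidx S + sidx S')%type;
     sob := ob;
     sproj := fun x => match x return Hom (ob x) V with
                       | inl i => sproj S i | inr j => sproj S' j end |}.

Definition two_star (V : Ob T) : SObj V := sdisj (star V) (star V).

(* \coprod^S_U T_U := \coprod_U Ind^V_U T_U, U ranging over the orbits
   (summands) of S, Ind^V_U = postcomposition with U -> V *)
Definition scoprod (V : Ob T) (S : SObj V) (Tf : forall i : sidx S, SObj (sob S i))
  : SObj V :=
  {| sidx := {i : sidx S & sidx (Tf i)};
     sob := fun x => sob (Tf (tag x)) (tagged x);
     sproj := fun x => comp (sproj S (tag x)) (sproj (Tf (tag x)) (tagged x)) |}.

Definition TClass := forall V : Ob T, SObj V -> Prop.

Definition iso_closed (C : TClass) : Prop :=
  forall V (S S' : SObj V), siso S S' -> C V S -> C V S'.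

Definition res_stable (C : TClass) : Prop :=
  forall (U V : Ob T) (f : Hom U V) (S : SObj V)
         (P : FObj) (p1 : FHom P (toF S)) (p2 : FHom P (rep U)),
    is_pullback (sprojF S) (repHom f) p1 p2 -> C V S -> C U (sliceOf p2).

Definition full_Tsubcat (C : TClass) : Prop := iso_closed C /\ res_stable C.

Definition is_wis (C : TClass) : Prop :=
  [/\ full_Tsubcat C,
      (forall V, (exists S, C V S) -> C V (star V)) &
      (forall V (S : SObj V) (Tf : forall i : sidx S, SObj (sob S i)),
          C V S -> (forall i, C (sob S i) (Tf i)) -> C V (scoprod Tf))].

Definition unital_wis (C : TClass) : Prop :=
  [/\ is_wis C,
      (forall V, exists S, C V S) &
      (forall V (S S' : SObj V), C V (sdisj S S') -> C V S /\ C V S')].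

(* join in the lattice of weak indexing systems (ordered by inclusion):
   the intersection of all weak indexing systems containing C and D *)
Definition wis_join (C D : TClass) : TClass :=
  fun V S => forall E : TClass, is_wis E ->
    (forall W X, C W X -> E W X) -> (forall W X, D W X -> E W X) -> E V S.

Definition nabla (C : TClass) : Ob T -> Prop := fun V => C V (two_star V).

End FT.

From mathcomp Require Import all_boot.
From Stdlib Require Import Classical Eqdep_dec.

Set Implicit Arguments.
Unset Strict Implicit.
Unset Printing Implicit Defensive.

(* For any class N of objects of T, the objects S of F_V such that every
   map g : W -> V with W outside N has at most one lift y(W) -> S over V
   form a weak indexing system.  Take N = nabla C \/ nabla D.  If some S in
   C_V had two distinct lifts of g : W -> V, pulling S back along g (T is
   orbital) would give an object of C_W with two distinct summands split over
   W; by atomicity such sections are inverse isomorphisms, so that object is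
   2.*_W + S', and unitality puts W in nabla C.  Hence C and D, and so their
   join, consist of objects with unique lifts outside N; since 2.*_V has two
   lifts of the identity, V lies in N. *)

Section Points.
Variable T : Cat.

(* A point [existT k a] of [fpt W X] is the map y(W) -> X of F_T picking the
   summand k and a : W -> X_k (Yoneda). *)
Definition fpt (W : Ob T) (X : FObj T) : Type :=
  {k : fidx X & Hom W (fob (f:=X) k)}.

Definition fptmap (W : Ob T) (X Y : FObj T) (f : FHom X Y) (x : fpt W X) : fpt W Y :=
  existT _ (fimap f (tag x)) (comp (fmap f (tag x)) (tagged x)).

Definition fpt_hom (W : Ob T) (X : FObj T) (x : fpt W X) : FHom (rep W) X :=
  @Build_FHom T (rep W) X (fun _ => tag x) (fun _ => tagged x).

Definition lifts (X : FObj T) (V W : Ob T) (p : FHom X (rep V)) (g : Hom W V)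
    (x : fpt W X) : Prop :=
  comp (fmap p (tag x)) (tagged x) = g.

Lemma fptmap_comp (W : Ob T) (X Y Z : FObj T) (g : FHom Y Z) (f : FHom X Y)
    (x : fpt W X) :
  fptmap g (fptmap f x) = fptmap (fcomp g f) x.
Proof. by rewrite /fptmap /= compA. Qed.

Lemma fptmap_feq (W : Ob T) (X Y : FObj T) (f f' : FHom X Y) (x : fpt W X) :
  feq f f' -> fptmap f x = fptmap f' x.
Proof.
move=> /(_ (tag x)) /(congr1 (fun z : {j : fidx Y & Hom (fob (f:=X) (tag x)) (fob (f:=Y) j)} =>
  existT (fun j => Hom W (fob (f:=Y) j)) (tag z) (comp (tagged z) (tagged x)))).
exact.
Qed.

Lemma fptmap_id (W : Ob T) (X : FObj T) (x : fpt W X) : fptmap (fid X) x = x.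
Proof. by case: x => k a; rewrite /fptmap /= comp1m. Qed.

Lemma feq_fpt_hom (W : Ob T) (X Y : FObj T) (f : FHom X Y) (x : fpt W X)
    (y : fpt W Y) :
  feq (fcomp f (fpt_hom x)) (fpt_hom y) <-> fptmap f x = y.
Proof. by case: y => k b; split=> [/(_ tt) | e []]. Qed.

Lemma liftsE (X : FObj T) (V W : Ob T) (p : FHom X (rep V)) (g : Hom W V)
    (x : fpt W X) :
  lifts p g x <-> fptmap p x = existT _ tt g.
Proof.
split=> [<- | /(congr1 (fun z : fpt W (rep V) => tagged z : Hom W V)) //].
by rewrite /fptmap; case: (fimap p (tag x)).
Qed.

Lemma lifts_fptmap (X Y : FObj T) (V W : Ob T) (p : FHom X (rep V))
    (q : FHom Y (rep V)) (k : FHom Y X) (g : Hom W V) (y : fpt W Y) :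
  feq (fcomp p k) q -> lifts q g y -> lifts p g (fptmap k y).
Proof. by move=> e /liftsE hy; apply/liftsE; rewrite fptmap_comp (fptmap_feq _ e). Qed.

Section Pullback.
Variables (X Y Z P : FObj T) (f : FHom X Z) (g : FHom Y Z).
Variables (p1 : FHom P X) (p2 : FHom P Y).
Hypothesis pb : is_pullback f g p1 p2.

Lemma pullback_fpt_exists (W : Ob T) (a : fpt W X) (b : fpt W Y) :
  fptmap f a = fptmap g b -> exists x : fpt W P, fptmap p1 x = a /\ fptmap p2 x = b.
Proof.
move=> e.
have [h [/(_ tt) ha [/(_ tt) hb _]]] := pb.2 _ (fpt_hom a) (fpt_hom b) (fun _ => e).
exists (existT _ (fimap h tt) (fmap h tt)).
by case: a b ha hb {e} => [i a] [j b] ha hb; split.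
Qed.

Lemma pullback_fpt_inj (W : Ob T) (x y : fpt W P) :
  fptmap p1 x = fptmap p1 y -> fptmap p2 x = fptmap p2 y -> x = y.
Proof.
move=> e1 e2.
have sq : feq (fcomp f (fpt_hom (fptmap p1 x))) (fcomp g (fpt_hom (fptmap p2 x))).
  move=> []; change (fptmap f (fptmap p1 x) = fptmap g (fptmap p2 x)).
  by rewrite !fptmap_comp (fptmap_feq _ pb.1).
have [h [_ [_ uniq]]] := pb.2 _ _ _ sq.
have /(_ tt) := uniq (fpt_hom x) (iffRL (feq_fpt_hom _ _ _) erefl)
                                (iffRL (feq_fpt_hom _ _ _) erefl).
have /(_ tt) := uniq (fpt_hom y) (iffRL (feq_fpt_hom _ _ _) (esym e1))
                                (iffRL (feq_fpt_hom _ _ _) (esym e2)).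
by case: x y {e1 e2 sq uniq} => [i a] [j b] /= -> ->.
Qed.

End Pullback.
End Points.

Section Atomic.
Variable T : Cat.
Hypothesis hatom : atomic T.

Lemma section_inv (U V : Ob T) (f : Hom U V) (s : Hom V U) :
  comp f s = idm V -> comp s f = idm U.
Proof.
move=> fs; have [g [fg gf]] := hatom (ex_intro _ s fs).
suff -> : s = g by [].
by rewrite -[g]compm1 -fs compA gf comp1m.
Qed.

Lemma section_uniq (U V : Ob T) (f : Hom U V) (s1 s2 : Hom V U) :
  comp f s1 = idm V -> comp f s2 = idm V -> s1 = s2.
Proof. by move=> /section_inv s1f fs2; rewrite -[s2]comp1m -s1f -compA fs2 compm1. Qed.

Lemma lifts_idm_inj (X : FObj T) (V : Ob T) (p : FHom X (rep V)) (x y : fpt V X) :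
  lifts p (idm V) x -> lifts p (idm V) y -> tag x = tag y -> x = y.
Proof.
case: x y => [i a] [j b]; rewrite /lifts /= => ha hb ij; subst j.
by rewrite (section_uniq ha hb).
Qed.

Section Split.
Variables (V : Ob T) (S : SObj V) (i j : sidx S).
Variables (a : Hom V (sob (s:=S) i)) (b : Hom V (sob (s:=S) j)).
Hypothesis ij : i != j.
Hypotheses (ha : comp (sproj (s:=S) i) a = idm V) (hb : comp (sproj (s:=S) j) b = idm V).

Definition split_rest : SObj V :=
  {| sidx := {k : sidx S | (k != i) && (k != j)};
     sob := fun r => sob (s:=S) (val r);
     sproj := fun r => sproj (s:=S) (val r) |}.

Definition split_two : SObj V := sdisj (two_star V) split_rest.

Definition split_in_pt (k : sidx S) :
    {y : sidx split_two & Hom (sob (s:=S) k) (sob (s:=split_two) y)} :=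
  match sumbool_of_bool ((k != i) && (k != j)) with
  | left e => existT _ (inr (exist _ k e)) (idm (sob (s:=S) k))
  | right _ => if k == i then existT _ (inl (inl tt)) (sproj (s:=S) k)
               else existT _ (inl (inr tt)) (sproj (s:=S) k)
  end.

Definition split_in : FHom (toF S) (toF split_two) :=
  @Build_FHom T (toF S) (toF split_two)
    (fun k => tag (split_in_pt k)) (fun k => tagged (split_in_pt k)).

Definition split_out_idx (y : sidx split_two) : sidx S :=
  match y with inl (inl _) => i | inl (inr _) => j | inr r => val r end.

Definition split_out : FHom (toF split_two) (toF S) :=
  @Build_FHom T (toF split_two) (toF S) split_out_idx
    (fun y => match y as y0 return Hom (sob (s:=split_two) y0) (sob (s:=S) (split_out_idx y0)) with
              | inl (inl _) => a | inl (inr _) => b | inr r => idm _ end).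

Lemma siso_split_two : siso S split_two.
Proof.
exists split_in, split_out; split.
- move=> k /=; rewrite /split_in_pt; case: sumbool_of_bool => e /=.
    by rewrite compm1.
  by case: (k == i); rewrite /= comp1m.
- by case=> [[[]|[]]|r] /=; rewrite ?ha ?hb ?compm1.
- move=> k /=; rewrite /split_in_pt; case: sumbool_of_bool => e /=.
    by rewrite comp1m.
  case: eqP => [-> | /eqP ki] /=; first by rewrite (section_inv ha).
  have -> : k = j by apply/eqP; move: e; rewrite ki; case: eqP.
  by rewrite (section_inv hb).
- case=> [[[]|[]]|[k e0]] /=; rewrite /split_in_pt.
  + case: sumbool_of_bool => e; first by exfalso; move: e; rewrite eqxx.
    by rewrite eqxx /= ha.
  + case: sumbool_of_bool => e; first by exfalso; move: e; rewrite eqxx andbF.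
    by rewrite eq_sym (negbTE ij) /= hb.
  + case: sumbool_of_bool => e; last by exfalso; move: e0; rewrite e.
    by rewrite /= comp1m (bool_irrelevance e e0).
Qed.

End Split.

Lemma unital_two_sections (C : TClass T) (V : Ob T) (S : SObj V)
    (x y : fpt V (toF S)) :
  unital_wis C -> tag x != tag y ->
  lifts (sprojF S) (idm V) x -> lifts (sprojF S) (idm V) y -> C V S -> nabla C V.
Proof.
case: x y => [i a] [j b] [[[iso _] _ _] _ split] /= ij ha hb CS.
by case: (split _ _ _ (iso _ _ _ (siso_split_two ij ha hb) CS)).
Qed.

End Atomic.

Lemma unital_two_lifts (T : Cat) (C : TClass T) (U W : Ob T) (S : SObj U)
    (g : Hom W U) (x y : fpt W (toF S)) :
  orbital T -> atomic T -> unital_wis C -> x <> y ->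
  lifts (sprojF S) g x -> lifts (sprojF S) g y -> C U S -> nabla C W.
Proof.
move=> horb hatom hC xy hx hy CS.
have [P [p1 [p2 pb]]] := horb _ _ _ (sprojF S) (repHom g).
have CP : C W (sliceOf p2) by case: hC => [[[_ res] _ _] _ _]; exact: res pb CS.
have lift_section z : lifts (sprojF S) g z ->
    exists z' : fpt W P, fptmap p1 z' = z /\ lifts p2 (idm W) z'.
  move=> /liftsE hz.
  have [|z' [e1 /liftsE e2]] := pullback_fpt_exists pb (a := z) (b := existT _ tt (idm W)).
    by rewrite hz /fptmap /= compm1.
  by exists z'.
have [x' [ex hx']] := lift_section x hx; have [y' [ey hy']] := lift_section y hy.
apply: (unital_two_sections hatom (S := sliceOf p2) hC _ hx' hy' CP).
by apply/eqP => /(lifts_idm_inj hatom hx' hy') e; apply: xy; rewrite -ex -ey e.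
Qed.

Section UniqueLifts.
Variables (T : Cat) (N : Ob T -> Prop).

Definition unique_lifts : TClass T := fun V S =>
  forall (W : Ob T) (g : Hom W V) (x y : fpt W (toF S)),
    ~ N W -> lifts (sprojF S) g x -> lifts (sprojF S) g y -> x = y.

Lemma unique_lifts_iso : iso_closed unique_lifts.
Proof.
move=> V S S' [h [k [_ ks _ hk]]] uS W g x y nW hx hy.
have hkK (z : fpt W (toF S')) : fptmap h (fptmap k z) = z.
  by rewrite fptmap_comp (fptmap_feq _ hk) fptmap_id.
by rewrite -(hkK x) -(hkK y) (uS W g _ _ nW (lifts_fptmap ks hx) (lifts_fptmap ks hy)).
Qed.

Lemma unique_lifts_res : res_stable unique_lifts.
Proof.
move=> U V f S P p1 p2 pb uS W g x y nW hx hy.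
have lift_p1 z : lifts p2 g z -> lifts (sprojF S) (comp f g) (fptmap p1 z).
  by move=> hz; apply: (lifts_fptmap pb.1); rewrite /lifts /= -compA hz.
apply: (pullback_fpt_inj pb); first exact: uS nW (lift_p1 _ hx) (lift_p1 _ hy).
by rewrite ((liftsE p2 g x).1 hx) ((liftsE p2 g y).1 hy).
Qed.

Lemma unique_lifts_star (V : Ob T) : unique_lifts (star V).
Proof. by move=> W g [[] a] [[] b] _; rewrite /lifts /= !comp1m => -> ->. Qed.

Lemma unique_lifts_scoprod (V : Ob T) (S : SObj V)
    (Tf : forall i, SObj (sob (s:=S) i)) :
  unique_lifts S -> (forall i, unique_lifts (Tf i)) -> unique_lifts (scoprod Tf).
Proof.
move=> uS uT W g [[k t] a] [[l u] b] nW; rewrite /lifts /= -!compA => hx hy.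
have /= E := uS W g (existT _ k _) (existT _ l _) nW hx hy.
have kl : k = l := congr1 tag E; subst l.
have gk := inj_pair2_eq_dec _ (@eq_comparable _) _ _ _ _ E.
move: (uT k W _ (existT _ t a) (existT _ u b) nW erefl (esym gk)).
move=> /(congr1 (fun z : fpt W (toF (Tf k)) =>
  existT (fun v : sidx (scoprod Tf) => Hom W (sob (s:=scoprod Tf) v))
         (existT _ k (tag z)) (tagged z))).
exact.
Qed.

Lemma unique_lifts_wis : is_wis unique_lifts.
Proof.
split; first split.
- exact: unique_lifts_iso.
- exact: unique_lifts_res.
- by move=> V _; apply: unique_lifts_star.
- by move=> V S Tf uS uT; apply: unique_lifts_scoprod.
Qed.

Lemma two_star_unique_lifts (V : Ob T) : unique_lifts (two_star V) -> N V.
Proof.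
move=> u; apply: NNPP => nV.
have := u V (idm V) (existT _ (inl tt) (idm V)) (existT _ (inr tt) (idm V)) nV.
by rewrite /lifts /= comp1m => /(_ erefl erefl) /(congr1 tag).
Qed.

Lemma unital_unique_lifts (C : TClass T) :
  orbital T -> atomic T -> unital_wis C -> (forall W, nabla C W -> N W) ->
  forall V (S : SObj V), C V S -> unique_lifts S.
Proof.
move=> horb hatom hC CN V S CS W g x y nW hx hy.
case: (classic (x = y)) => // xy.
by case: nW; apply/CN/(unital_two_lifts horb hatom hC xy hx hy CS).
Qed.

End UniqueLifts.

Theorem mainTheorem17 (T : Cat) (horb : orbital T) (hatom : atomic T)
  (C D : TClass T) (hC : unital_wis C) (hD : unital_wis D) :
  forall V : Ob T, nabla (wis_join C D) V <-> nabla C V \/ nabla D V.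
Proof.
move=> V; split; last by case=> hV E _ CE DE; [apply: CE | apply: DE].
pose N W := nabla C W \/ nabla D W.
move/(_ (unique_lifts N) (unique_lifts_wis N)).
move/(_ (unital_unique_lifts horb hatom hC (fun W => @or_introl _ _))).
move/(_ (unital_unique_lifts horb hatom hD (fun W => @or_intror _ _))).
exact: two_star_unique_lifts.
Qed.
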